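(* Assume the standing setting in the context. Fix $e\in\mathcal E^d$, $M>0$, $x\in\mathbb Z^d$, and suppose $e\in\pi^{(x)}$ and $\tau_e\ge M$. Then for any $k\in\mathbb N$ such that ${S^e_k}'$ encloses neither $0$ nor $x$, the edge $e$ is $(k,M)$-large.
   Context: Setting: $d\ge2$, i.i.d. non-negative weights $\tau_e$ on the nearest-neighbor edges $\mathcal E^d$ of $\mathbb Z^d$, with the standing assumption $F(r)<p_c(d)$ if $r=0$ and $F(r)<\vec p_c(d)$ if $r>0$ ($F$ the distribution function, $r$ the essential infimum, $p_c,\vec p_c$ the bond and oriented bond percolation thresholds). $T(\gamma)=\sum_{e\in\gamma}\tau_e$; $\pi^{(x)}$ is the first (in a fixed deterministic ordering of finite vertex self-avoiding paths) vertex self-avoiding path from $0$ to $x$ minimizing $T$. For $e=\{a,b\}$ let $v_e$ be the endpoint of smaller $\ell^1$ norm. For $k\ge1$: ${S^e_k}'=\{z\in\mathbb Z^d:|v_e-z|_\infty=k\}$ and $S^e_k=\{\{u,w\}\in\mathcal E^d:u,w\in{S^e_k}'\}$; ${S^e_0}'$ is the set of the two endpoints of $e$ and $S^e_0=\{e\}$. For $u,w\in{S^e_h}'$, $T_{S^e_h}(u,w)$ is the minimum of $T(\gamma)$ over self-avoiding paths from $u$ to $w$ using only edges of $S^e_h$. The edge $e$ is $(k,M)$-large if for each $h=0,1,\dots,k$ there exist $u,w\in{S^e_h}'$ with $T_{S^e_h}(u,w)\ge M$. A set ${S^e_k}'$ encloses a vertex $y$ if $y$ is not in the unbounded component of $\mathbb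 Z^d\setminus{S^e_k}'$. *)

From mathcomp Require Import all_boot all_order all_algebra.
From mathcomp Require Import reals.
Set Implicit Arguments. Unset Strict Implicit. Unset Printing Implicit Defensive.
Import Order.TTheory GRing.Theory Num.Theory.
Local Open Scope ring_scope.

Definition V (d : nat) := {ffun 'I_d -> int}.

Definition origin (d : nat) : V d := [ffun => 0].

Definition l1dist d (u w : V d) : nat := (\sum_(i < d) `|u i - w i|%N)%N.
Definition linfdist d (u w : V d) : nat := (\max_(i < d) `|u i - w i|%N)%N.
Definition l1norm d (u : V d) : nat := l1dist u (origin d).
Definition linfnorm d (u : V d) : nat := linfdist u (origin d).

Definition adj d : rel (V d) := fun u w => l1dist u w == 1%N.

(* A (vertex) path is u :: s; it goes from u to w and is self-avoiding *)
Definition sa_path d (u : V d) (s : seq (V d)) (w : V d) : Prop :=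
  [/\ path (@adj d) u s, last u s = w & uniq (u :: s)].

Definition steps d (u : V d) (s : seq (V d)) : seq (V d * V d) := zip (u :: s) s.

(* edge weights: tau u w is the weight of the undirected edge {u,w}
   (required symmetric and nonnegative); T(gamma) = sum of weights of its edges *)
Definition passage_time {R : realType} d (tau : V d -> V d -> R)
  (u : V d) (s : seq (V d)) : R :=
  \sum_(p <- steps u s) tau p.1 p.2.

Definition edge_in_path d (a b : V d) (u : V d) (s : seq (V d)) : Prop :=
  exists2 p, p \in steps u s & (p = (a, b) \/ p = (b, a)).

Definition geodesic {R : realType} d (tau : V d -> V d -> R)
  (s : seq (V d)) (x : V d) : Prop :=
  sa_path (origin d) s x /\
  forall s', sa_path (origin d) s' x ->
    passage_time tau (origin d) s <= passage_time tau (origin d) s'.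

Definition ve d (a b : V d) : V d := if (l1norm a <= l1norm b)%N then a else b.

Definition sphV d (a b : V d) (h : nat) (z : V d) : Prop :=
  if h == 0%N then z = a \/ z = b else linfdist (ve a b) z = h.

Definition sphE d (a b : V d) (h : nat) (u w : V d) : Prop :=
  if h == 0%N then (u = a /\ w = b) \/ (u = b /\ w = a)
  else adj u w /\ sphV a b h u /\ sphV a b h w.

(* T_{S^e_h}(u,w) >= M, where T_{S^e_h}(u,w) is the minimum of T over
   self-avoiding paths from u to w using only edges of S^e_h (the minimum
   over an empty family being +infinity). *)
Definition TS_ge {R : realType} d (tau : V d -> V d -> R) (a b : V d) (h : nat)
  (u w : V d) (M : R) : Prop :=
  forall s, sa_path u s w -> (forall p, p \in steps u s -> sphE a b h p.1 p.2) ->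
    M <= passage_time tau u s.

Definition large {R : realType} d (tau : V d -> V d -> R) (a b : V d)
  (k : nat) (M : R) : Prop :=
  forall h, (h <= k)%N ->
    exists u w, [/\ sphV a b h u, sphV a b h w & TS_ge tau a b h u w M].

Definition in_unbounded_comp d (S : V d -> Prop) (y : V d) : Prop :=
  forall N : nat, exists s, [/\ path (@adj d) y s,
    (forall v, v \in y :: s -> ~ S v) & (N <= linfnorm (last y s))%N].

Definition encloses d (S : V d -> Prop) (y : V d) : Prop :=
  ~ in_unbounded_comp S y.

From mathcomp Require Import all_boot all_order all_algebra.
From mathcomp Require Import reals.
From mathcomp Require Import zify lra.
From Stdlib Require Import Classical.
Set Implicit Arguments. Unset Strict Implicit.
Import Order.TTheory GRing.Theory Num.Theory.
Local Open Scope ring_scope.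

(* Write v = v_e and fix h <= k, h > 0.  A vertex in the unbounded component
   of Z^d \ S^e_k' is at l^oo-distance > k from v: along a walk to infinity
   the 1-Lipschitz function |v - .|_oo would otherwise take the value k, i.e.
   the walk would meet S^e_k'.  So both 0 and x are farther than h from v, while both endpoints of e are
   within distance 1 of v.  Hence the geodesic pi^(x) meets S^e_h' at a vertex
   u before e and at a vertex w after e.  By loop erasure a segment of a
   geodesic is minimal even among all walks between its endpoints, so every
   path from u to w costs at least the segment from u to w, which contains e
   and thus costs at least tau_e >= M.  For h = 0 the only path from a to b
   inside S^e_0 = {e} is e itself. *)

Section PassageTime.

Variables (R : realType) (d : nat) (tau : V d -> V d -> R).

Lemma passage_time_nil (u : V d) : passage_time tau u [::] = 0.
Proof. by rewrite /passage_time /steps /= big_nil. Qed.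

Lemma passage_time_cons (u w : V d) p :
  passage_time tau u (w :: p) = tau u w + passage_time tau w p.
Proof. by rewrite /passage_time /steps /= big_cons. Qed.

Lemma passage_time_cat (u : V d) p q :
  passage_time tau u (p ++ q) =
  passage_time tau u p + passage_time tau (last u p) q.
Proof.
elim: p u => [|w p IHp] u /=; first by rewrite passage_time_nil add0r.
by rewrite !passage_time_cons IHp addrA.
Qed.

Hypothesis tau_ge0 : forall u w, 0 <= tau u w.

Lemma passage_time_ge0 (u : V d) p : 0 <= passage_time tau u p.
Proof.
elim: p u => [|w p IHp] u; first by rewrite passage_time_nil.
by rewrite passage_time_cons addr_ge0.
Qed.

Lemma sa_path_suffix (u w y : V d) p p1 p2 :
  sa_path u p w -> u :: p = p1 ++ y :: p2 ->
  sa_path y p2 w /\ passage_time tau y p2 <= passage_time tau u p.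
Proof.
case: p1 => [|z p1] /=; first by move=> hp [<- <-].
move=> hsa [uz E]; move: hsa; rewrite uz E => -[hpath hlast huniq].
move: hpath; rewrite cat_path /= => /and3P [_ _ hp2].
split; first split => //.
- by rewrite last_cat in hlast.
- by move: huniq; rewrite -cat_cons cat_uniq => /and3P [].
rewrite passage_time_cat /= passage_time_cons.
have := passage_time_ge0 z p1; have := tau_ge0 (last z p1) y; lra.
Qed.

Lemma loop_erasure (u : V d) p : path (@adj d) u p ->
  exists p', sa_path u p' (last u p) /\
             passage_time tau u p' <= passage_time tau u p.
Proof.
elim: p u => [|w p IHp] u /=; first by exists [::].
move=> /andP [huw hp]; have [p' [hsa hle]] := IHp w hp.
have tau_uw := tau_ge0 u w.
case: (boolP (u \in w :: p')) => [u_in | u_notin].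
  have [p1 [p2 E]] : exists p1 p2, w :: p' = p1 ++ u :: p2.
    by case/splitPr: u_in => p1 p2; exists p1, p2.
  have [hsa2 hle2] := sa_path_suffix hsa E.
  by exists p2; split; rewrite // passage_time_cons; lra.
exists (w :: p'); case: hsa => hp' hl hu; split.
  by split => //=; rewrite ?huw ?hp' ?u_notin.
by rewrite !passage_time_cons lerD2l.
Qed.

Lemma geodesic_segment_min (s : seq (V d)) (x : V d) q1 q2 q3 s' :
  geodesic tau s x -> s = q1 ++ q2 ++ q3 ->
  let u := last (origin d) q1 in
  path (@adj d) u s' -> last u s' = last u q2 ->
  passage_time tau u q2 <= passage_time tau u s'.
Proof.
move=> [[hpath hlast _] hmin] E u hs' hl'.
move: hpath hlast; rewrite E !cat_path !last_cat -/u.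
move=> /and3P [hq1 _ hq3] hlast.
have hwalk : path (@adj d) (origin d) (q1 ++ s' ++ q3).
  by rewrite !cat_path hq1 -/u hs' hl' hq3.
have [p [hsa hle]] := loop_erasure hwalk.
move: hsa; rewrite !last_cat -/u hl' hlast => /hmin.
move: hle; rewrite E !passage_time_cat -/u hl'; lra.
Qed.

End PassageTime.

Lemma mem_steps_split d (u y z : V d) p : (y, z) \in steps u p ->
  exists p1 p2, p = p1 ++ z :: p2 /\ last u p1 = y.
Proof.
elim: p u => [|w p IHp] u //=.
rewrite /steps /= in_cons => /orP [/eqP [-> ->] | hyz]; first by exists [::], p.
have [p1 [p2 [-> <-]]] := IHp w hyz.
by exists (w :: p1), p2.
Qed.

Section LevelCrossing.

Variables (d : nat) (f : V d -> nat).
Hypothesis f_lipschitz :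
  forall u w, adj u w -> (f w <= (f u).+1 /\ f u <= (f w).+1)%N.

Lemma path_level_crossing (u : V d) p h : path (@adj d) u p ->
  ((f u <= h <= f (last u p)) || (f (last u p) <= h <= f u))%N ->
  exists p1 p2, p = p1 ++ p2 /\ f (last u p1) = h.
Proof.
elim: p u => [|w p IHp] u /=.
  move=> _ hh; exists [::], [::]; split => //=; lia.
move=> /andP [huw hp] hh.
case: (eqVneq (f u) h) => [fu_h|fu_neq]; first by exists [::], (w :: p).
have [h1 h2] := f_lipschitz huw.
have [p1 [p2 [-> <-]]] := IHp w hp (ltac:(lia)).
by exists (w :: p1), p2.
Qed.

Variables (R : realType) (tau : V d -> V d -> R).
Hypothesis tau_ge0 : forall u w, 0 <= tau u w.

Lemma geodesic_level_crossing (s : seq (V d)) (x y z : V d) h (M : R) :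
  geodesic tau s x -> (y, z) \in steps (origin d) s -> M <= tau y z ->
  (f y <= h)%N -> (f z <= h)%N -> (h <= f (origin d))%N -> (h <= f x)%N ->
  exists u w, [/\ f u = h, f w = h & forall s', path (@adj d) u s' ->
                  last u s' = w -> M <= passage_time tau u s'].
Proof.
move=> hgeo hyz tau_yz fy fz f0 fx.
have [[hpath hlast _] _] := hgeo.
have [p1 [p2 [E Ly]]] := mem_steps_split hyz.
move: hpath; rewrite E cat_path Ly /= => /and3P [hp1 _ hp2].
have Lx : last z p2 = x by rewrite -hlast E last_cat Ly.
have [q1 [q2 [E1 Lu]]] :=
  path_level_crossing hp1 (h := h) (ltac:(rewrite Ly; lia)).
have [r1 [r2 [E2 Lw]]] :=
  path_level_crossing hp2 (h := h) (ltac:(rewrite Lx; lia)).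
exists (last (origin d) q1), (last z r1); split => // s' hs' hl'.
have Lq2 : last (last (origin d) q1) q2 = y by rewrite -Ly E1 last_cat.
have seg : s = q1 ++ (q2 ++ z :: r1) ++ r2 by rewrite E E1 E2 -!catA.
have := geodesic_segment_min tau_ge0 hgeo seg hs'.
rewrite !last_cat Lq2 /= hl' => /(_ erefl).
rewrite passage_time_cat passage_time_cons Lq2.
have := passage_time_ge0 tau_ge0 (last (origin d) q1) q2.
have := passage_time_ge0 tau_ge0 z r1; lra.
Qed.

End LevelCrossing.

Section LinfDistance.

Variable d : nat.

Lemma linfdistC (u w : V d) : linfdist u w = linfdist w u.
Proof. by apply: eq_bigr => i _; rewrite -abszN opprB. Qed.

Lemma linfdistxx (u : V d) : linfdist u u = 0%N.
Proof.
by apply/eqP; rewrite -leqn0; apply/bigmax_leqP => i _; rewrite subrr.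
Qed.

Lemma linfdist_triangle (u v w : V d) :
  (linfdist u w <= linfdist u v + linfdist v w)%N.
Proof.
apply/bigmax_leqP => i _.
by apply: leq_trans (leq_add (leq_bigmax i) (leq_bigmax i)) => /=; lia.
Qed.

Lemma linfdist_le_l1dist (u w : V d) : (linfdist u w <= l1dist u w)%N.
Proof.
by apply/bigmax_leqP => i _; rewrite /l1dist (bigD1 i) //= leq_addr.
Qed.

Lemma linfdist_adj_le1 (u w : V d) : adj u w -> (linfdist u w <= 1)%N.
Proof. by move/eqP <-; apply: linfdist_le_l1dist. Qed.

Lemma adj_neq (u w : V d) : adj u w -> u <> w.
Proof.
by move=> + uw; rewrite uw /adj /l1dist big1 // => i _; rewrite subrr.
Qed.

Lemma linfdist_lipschitz (v u w : V d) : adj u w ->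
  (linfdist v w <= (linfdist v u).+1 /\ linfdist v u <= (linfdist v w).+1)%N.
Proof.
move=> huw; have := linfdist_adj_le1 huw.
have := linfdist_triangle v u w; have := linfdist_triangle v w u.
rewrite (linfdistC w u); lia.
Qed.

Lemma linfdist_ve_le1 (a b y : V d) : adj a b -> y = a \/ y = b ->
  (linfdist (ve a b) y <= 1)%N.
Proof.
move=> hab hy; have := linfdist_adj_le1 hab.
rewrite /ve; case: ifP => _; case: hy => ->;
  by rewrite ?linfdistxx // linfdistC.
Qed.

Lemma in_unbounded_comp_linfdist_gt (S : V d -> Prop) (v y : V d) k :
  (forall z, linfdist v z = k -> S z) -> in_unbounded_comp S y ->
  (k < linfdist v y)%N.
Proof.
move=> S_level hy; rewrite ltnNge; apply/negP => y_near.
have [t [ht t_avoid t_far]] := hy (linfnorm v + k + 1)%N.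
have := linfdist_triangle (last y t) v (origin d).
rewrite /linfnorm in t_far; rewrite (linfdistC (last y t) v) => t_tri.
have [p1 [p2 [E hk]]] :=
  path_level_crossing (@linfdist_lipschitz v) (h := k) ht (ltac:(lia)).
apply: (t_avoid (last y p1)); last exact: S_level.
by rewrite E -cat_cons mem_cat mem_last.
Qed.

End LinfDistance.

Lemma sphV_linfdist d (a b z : V d) h :
  (0 < h)%N -> linfdist (ve a b) z = h -> sphV a b h z.
Proof. by rewrite /sphV lt0n => /negbTE ->. Qed.

Lemma TS_ge_level0 (R : realType) d (tau : V d -> V d -> R) (a b : V d) M :
  (forall u w, 0 <= tau u w) -> adj a b -> M <= tau a b ->
  TS_ge tau a b 0 a b M.
Proof.
move=> tau_ge0 hab tau_ab [|w p] [_ /= hl _]; first by case: (adj_neq hab).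
move=> /(_ (a, w)); rewrite /steps mem_head /sphE /= => /(_ isT).
case=> [[_ ->]|[ab _]]; last by case: (adj_neq hab).
by rewrite passage_time_cons; have := passage_time_ge0 tau_ge0 b p; lra.
Qed.

Theorem lemma3p1 (R : realType) (d : nat) (hd : (2 <= d)%N)
  (tau : V d -> V d -> R)
  (tau_sym : forall u w, tau u w = tau w u)
  (tau_nonneg : forall u w, 0 <= tau u w)
  (a b : V d) (hab : adj a b) (M : R) (hM : 0 < M) (x : V d)
  (s : seq (V d)) (hgeo : geodesic tau s x)
  (he : edge_in_path a b (origin d) s) (htau : M <= tau a b)
  (k : nat)
  (h0 : ~ encloses (sphV a b k) (origin d))
  (hx : ~ encloses (sphV a b k) x) :
  large tau a b k M.
Proof.
move=> h hk; case: (posnP h) => [->|h_gt0].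
  by exists a, b; split; [left|right|exact: TS_ge_level0].
have sphV_k z : linfdist (ve a b) z = k -> sphV a b k z.
  by apply: sphV_linfdist; apply: leq_trans hk.
have far0 := in_unbounded_comp_linfdist_gt sphV_k (NNPP _ h0).
have farx := in_unbounded_comp_linfdist_gt sphV_k (NNPP _ hx).
case: he => [[y z] hyz e_yz].
have [ey ez tau_yz] : [/\ y = a \/ y = b, z = a \/ z = b & M <= tau y z].
  by case: e_yz => [[-> ->]|[-> ->]]; split; auto; rewrite -tau_sym.
have [u [w [fu fw u_w_far]]] :=
  geodesic_level_crossing (@linfdist_lipschitz d (ve a b)) tau_nonneg (h := h)
    hgeo hyz tau_yz (leq_trans (linfdist_ve_le1 hab ey) h_gt0)
    (leq_trans (linfdist_ve_le1 hab ez) h_gt0) (ltnW (leq_ltn_trans hk far0))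
    (ltnW (leq_ltn_trans hk farx)).
exists u, w; split; try exact: sphV_linfdist.
by move=> s' [hs' hl' _] _; apply: u_w_far.
Qed.
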